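(* Let $H_B=(V_B,E_B)$ be a 3-uniform hypergraph with $n=|V_B|$ vertices, let $\varepsilon=1/n^{100}$, and let $\{\mathbf v_a\}_{a\in V_B\cup\{\emptyset\}}$ be a feasible solution of the SDP below with respect to which every vertex of $H_B$ is $\varepsilon$-balanced. Then for every edge $\{a,b,c\}\in E_B$, $\|\bar{\mathbf u}_a+\bar{\mathbf u}_b+\bar{\mathbf u}_c\|^2\le 18\varepsilon$.
   Context: SDP: unit vectors $\mathbf v_a\in\mathbb R^d$ for $a\in V_B\cup\{\emptyset\}$ with $\mathbf v_a+\mathbf v_b+\mathbf v_c=-\mathbf v_\emptyset$ for every edge $\{a,b,c\}$. $\gamma_a=\langle\mathbf v_a,\mathbf v_\emptyset\rangle$; vertex $a$ is $\varepsilon$-balanced if $\gamma_a\in[-1/3-\varepsilon,-1/3+\varepsilon]$. For such $a$, $\bar{\mathbf u}_a=\frac{\mathbf v_a-\gamma_a\mathbf v_\emptyset}{\sqrt{1-\gamma_a^2}}$ (the unit vector along the component of $\mathbf v_a$ orthogonal to $\mathbf v_\emptyset$). *)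

From HB Require Import structures.
From mathcomp Require Import all_boot all_order all_algebra.
Set Implicit Arguments. Unset Strict Implicit. Unset Printing Implicit Defensive.
Import Order.TTheory GRing.Theory Num.Theory.
Local Open Scope ring_scope.

Definition dotv (R : rcfType) (d : nat) (x y : 'rV[R]_d) : R :=
  \sum_(i < d) x 0 i * y 0 i.

Definition sqnorm (R : rcfType) (d : nat) (x : 'rV[R]_d) : R := dotv x x.

(* The SDP vectors are indexed by option V: [None] plays the role of the
   special index "emptyset", [Some a] is the vector of vertex a. *)

Definition three_uniform (V : finType) (E : {set {set V}}) : Prop :=
  forall e, e \in E -> #|e| = 3%N.

Definition sdp_feasible (R : rcfType) (d : nat) (V : finType)
  (E : {set {set V}}) (v : option V -> 'rV[R]_d) : Prop :=
  (forall x, sqnorm (v x) = 1) /\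
  (forall e, e \in E -> \sum_(a in e) v (Some a) = - v None).

Definition gamma (R : rcfType) (d : nat) (V : finType)
  (v : option V -> 'rV[R]_d) (a : V) : R := dotv (v (Some a)) (v None).

Definition balanced (R : rcfType) (d : nat) (V : finType)
  (v : option V -> 'rV[R]_d) (eps : R) (a : V) : Prop :=
  -(1/3) - eps <= gamma v a <= -(1/3) + eps.

Definition ubar (R : rcfType) (d : nat) (V : finType)
  (v : option V -> 'rV[R]_d) (a : V) : 'rV[R]_d :=
  (Num.sqrt (1 - gamma v a ^+ 2))^-1 *: (v (Some a) - gamma v a *: v None).

From HB Require Import structures.
From mathcomp Require Import all_boot all_order all_algebra.
From mathcomp Require Import ring lra.
Set Implicit Arguments. Unset Strict Implicit. Unset Printing Implicit Defensive.
Import Order.TTheory GRing.Theory Num.Theory.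
Local Open Scope ring_scope.

(* Let w_a = v_a - gamma_a v_0 be the component of v_a orthogonal to v_0, so
   that ubar_a = w_a / sqrt(1 - gamma_a^2) and |w_a|^2 = 1 - gamma_a^2.  On an
   edge, sum gamma_a = <-v_0, v_0> = -1, hence sum w_a = 0 and
   sum ubar_a = sum (1/sqrt(1 - gamma_a^2) - 1/sqrt(8/9)) w_a.  Since gamma_a
   is eps-close to -1/3, each term has squared norm at most 2 eps, and
   |x + y + z|^2 <= 3 (|x|^2 + |y|^2 + |z|^2) gives 3 * 3 * 2 eps. *)

Section InnerProduct.
Variables (R : rcfType) (d : nat).
Implicit Types (x y z u : 'rV[R]_d) (k : R).

Lemma dotvC x y : dotv x y = dotv y x.
Proof. by apply: eq_bigr => i _; rewrite mulrC. Qed.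

Lemma dotvDl x y z : dotv (x + y) z = dotv x z + dotv y z.
Proof. by rewrite /dotv -big_split; apply: eq_bigr => i _; rewrite !mxE mulrDl. Qed.

Lemma dotvZl k x y : dotv (k *: x) y = k * dotv x y.
Proof. by rewrite /dotv mulr_sumr; apply: eq_bigr => i _; rewrite !mxE mulrA. Qed.

Lemma dotvNl x y : dotv (- x) y = - dotv x y.
Proof. by rewrite -scaleN1r dotvZl mulN1r. Qed.

Lemma dotvBl x y z : dotv (x - y) z = dotv x z - dotv y z.
Proof. by rewrite dotvDl dotvNl. Qed.

Lemma dotvBr x y z : dotv x (y - z) = dotv x y - dotv x z.
Proof. by rewrite dotvC dotvBl !(dotvC x). Qed.

Lemma dotvZr k x y : dotv x (k *: y) = k * dotv x y.
Proof. by rewrite dotvC dotvZl dotvC. Qed.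

Lemma dotv_suml (I : finType) (A : {pred I}) (x : I -> 'rV[R]_d) y :
  dotv (\sum_(i in A) x i) y = \sum_(i in A) dotv (x i) y.
Proof.
rewrite /dotv exchange_big; apply: eq_bigr => j _.
by rewrite summxE mulr_suml.
Qed.

Lemma dotv_sumr (I : finType) (A : {pred I}) x (y : I -> 'rV[R]_d) :
  dotv x (\sum_(i in A) y i) = \sum_(i in A) dotv x (y i).
Proof. by rewrite dotvC dotv_suml; apply: eq_bigr => i _; rewrite dotvC. Qed.

Lemma sqnorm_ge0 x : 0 <= sqnorm x.
Proof. by apply: sumr_ge0 => i _; rewrite -expr2 sqr_ge0. Qed.

Lemma sqnormZ k x : sqnorm (k *: x) = k ^+ 2 * sqnorm x.
Proof. by rewrite /sqnorm dotvZl dotvZr mulrA expr2. Qed.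

Lemma dotv2_le_sqnormD x y : 2 * dotv x y <= sqnorm x + sqnorm y.
Proof.
have := sqnorm_ge0 (x - y).
by rewrite /sqnorm !(dotvBl, dotvBr) (dotvC y x); lra.
Qed.

Lemma sqnorm_sum_le (I : finType) (A : {pred I}) (x : I -> 'rV[R]_d) :
  sqnorm (\sum_(i in A) x i) <= #|A|%:R * \sum_(i in A) sqnorm (x i).
Proof.
set S := \sum_(i in A) sqnorm (x i).
have -> : sqnorm (\sum_(i in A) x i) = \sum_(i in A) \sum_(j in A) dotv (x i) (x j).
  by rewrite /sqnorm dotv_suml; apply: eq_bigr => i _; rewrite dotv_sumr.
have double_le : 2 * \sum_(i in A) \sum_(j in A) dotv (x i) (x j)
                 <= \sum_(i in A) \sum_(j in A) (sqnorm (x i) + sqnorm (x j)).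
  rewrite mulr_sumr; apply: ler_sum => i _.
  by rewrite mulr_sumr; apply: ler_sum => j _; apply: dotv2_le_sqnormD.
have double_eq : \sum_(i in A) \sum_(j in A) (sqnorm (x i) + sqnorm (x j))
                 = 2 * (#|A|%:R * S).
  rewrite (eq_bigr (fun i => sqnorm (x i) *+ #|A| + S)); last first.
    by move=> i _; rewrite big_split /= sumr_const.
  by rewrite big_split /= sumr_const sumrMnl !mulr_natl mulr2n.
lra.
Qed.

Lemma sqnorm_sub_proj x u :
  sqnorm u = 1 -> sqnorm (x - dotv x u *: u) = sqnorm x - dotv x u ^+ 2.
Proof.
rewrite /sqnorm => unit_u; rewrite !(dotvBl, dotvBr, dotvZl, dotvZr).
by rewrite (dotvC u x) unit_u; ring.
Qed.

Lemma sum_sub_proj_eq0 (I : finType) (A : {pred I}) (x : I -> 'rV[R]_d) u :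
  sqnorm u = 1 -> \sum_(i in A) x i = - u ->
  \sum_(i in A) (x i - dotv (x i) u *: u) = 0.
Proof.
rewrite /sqnorm => unit_u sum_x.
by rewrite sumrB -scaler_suml -dotv_suml sum_x dotvNl unit_u scaleN1r subrr.
Qed.

End InnerProduct.

Lemma rescale_error_le (R : rcfType) (g eps : R) :
  0 <= eps <= 1/3 -> -(1/3) - eps <= g <= -(1/3) + eps ->
  ((Num.sqrt (1 - g ^+ 2))^-1 - (Num.sqrt (8/9))^-1) ^+ 2 * (1 - g ^+ 2)
    <= 2 * eps.
Proof.
move=> /andP[eps_ge0 eps_le] /andP[g_ge g_le].
set s := Num.sqrt (1 - g ^+ 2); set t := Num.sqrt (8/9).
have s_gt0 : 0 < s by rewrite sqrtr_gt0; nra.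
have t_gt0 : 0 < t by rewrite sqrtr_gt0; lra.
have s2 : s ^+ 2 = 1 - g ^+ 2 by rewrite sqr_sqrtr //; nra.
have t2 : t ^+ 2 = 8/9 by rewrite sqr_sqrtr //; lra.
rewrite -s2.
have -> : (s^-1 - t^-1) ^+ 2 * s ^+ 2 = (t - s) ^+ 2 / t ^+ 2.
  by field; rewrite !gt_eqF.
have diff_sq : (t - s) ^+ 2 * (t + s) ^+ 2 = (g + 1/3) ^+ 2 * (g - 1/3) ^+ 2.
  by rewrite -!exprMn -subr_sqr t2 s2; congr (_ ^+ 2); field.
have diff_le : (t - s) ^+ 2 * t ^+ 2 <= eps ^+ 2.
  apply: (le_trans (y := (t - s) ^+ 2 * (t + s) ^+ 2)).
    by rewrite ler_wpM2l ?sqr_ge0 // lerXn2r ?nnegrE; nra.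
  rewrite diff_sq -[eps ^+ 2]mulr1.
  by apply: ler_pM; rewrite ?sqr_ge0 //; nra.
rewrite ler_pdivrMr ?exprn_gt0 // t2.
move: diff_le; rewrite t2; nra.
Qed.

Lemma inv_exp_le_third (R : realFieldType) (x : R) (n : nat) :
  3 <= x -> 1 / x ^+ n.+1 <= 1/3.
Proof.
move=> x_ge3.
have x_le : x <= x ^+ n.+1 by rewrite exprS ler_peMr ?exprn_ege1 //; lra.
by rewrite !div1r lef_pV2 ?posrE ?exprn_gt0 //; lra.
Qed.

Lemma sqnorm_ubar_sub_le (R : rcfType) (d : nat) (V : finType)
  (v : option V -> 'rV[R]_d) (eps : R) (a : V) :
  (forall x, sqnorm (v x) = 1) -> 0 <= eps <= 1/3 -> balanced v eps a ->
  sqnorm (ubar v a - (Num.sqrt (8/9))^-1 *: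
            (v (Some a) - gamma v a *: v None)) <= 2 * eps.
Proof.
move=> unit_v eps_bd bal.
rewrite /ubar -scalerBl sqnormZ /gamma sqnorm_sub_proj // unit_v.
exact: rescale_error_le.
Qed.

Theorem lemma4p1 (R : rcfType) (d : nat) (V : finType)
  (E : {set {set V}}) (v : option V -> 'rV[R]_d) :
  three_uniform E ->
  sdp_feasible E v ->
  (forall a : V, balanced v (1 / (#|V|%:R ^+ 100)) a) ->
  forall e, e \in E ->
    sqnorm (\sum_(a in e) ubar v a) <= 18 * (1 / (#|V|%:R ^+ 100)).
Proof.
move=> uniform [unit_v edge_sum] bal e e_in.
set eps := 1 / _.
have card_e := uniform e e_in.
have eps_bd : 0 <= eps <= 1/3.
  rewrite divr_ge0 ?exprn_ge0 //=; apply: inv_exp_le_third.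
  by rewrite (ler_nat R 3) -card_e max_card.
pose k : R := (Num.sqrt (8/9))^-1.
pose w := fun a => v (Some a) - gamma v a *: v None.
have -> : \sum_(a in e) ubar v a = \sum_(a in e) (ubar v a - k *: w a).
  have sum_w : \sum_(a in e) w a = 0.
    exact: sum_sub_proj_eq0 (unit_v None) (edge_sum e e_in).
  by rewrite sumrB -scaler_sumr sum_w scaler0 subr0.
apply: (le_trans (sqnorm_sum_le _ _)); rewrite card_e.
have : \sum_(a in e) sqnorm (ubar v a - k *: w a) <= \sum_(a in e) 2 * eps.
  by apply: ler_sum => a _; apply: sqnorm_ubar_sub_le.
by rewrite sumr_const card_e -mulr_natr; lra.
Qed.
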